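(* Let $X=Y\cup Z$ where $Y\cap Z=\emptyset$, $Z$ is a $\sigma$-compact subspace of $X$ and $Y$ is a closed discrete subset of $X$. If $X$ is absolutely strongly star-Lindelöf and $|Y|<\mathfrak{b}$, then $X$ is selectively strongly star-Hurewicz.
   Context: All spaces are regular. $St(A,\mathcal{U})=\bigcup\{U\in\mathcal{U}:U\cap A\neq\emptyset\}$. $\mathfrak{b}$ is the bounding number. $X$ is absolutely strongly star-Lindelöf if for every open cover $\mathcal{U}$ and every dense $D\subseteq X$ there is a countable $C\subseteq D$ with $St(C,\mathcal{U})=X$. $X$ is selectively strongly star-Hurewicz if for every sequence $(\mathcal{U}_n)$ of open covers and every sequence $(D_n)$ of dense subsets there are finite $F_n\subseteq D_n$ such that every $x\in X$ lies in $St(F_n,\mathcal{U}_n)$ for all but finitely many $n$. *)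

From mathcomp Require Import all_boot all_order.
From mathcomp Require Import all_classical all_reals all_analysis.
Set Implicit Arguments. Unset Strict Implicit. Unset Printing Implicit Defensive.
Local Open Scope classical_set_scope.

Definition St (T : Type) (A : set T) (U : set (set T)) : set T :=
  \bigcup_(V in [set V | U V /\ V `&` A !=set0]) V.

Definition open_cover (T : topologicalType) (U : set (set T)) : Prop :=
  (forall V, U V -> open V) /\ \bigcup_(V in U) V = setT.

Definition sigma_compact (T : topologicalType) (Z : set T) : Prop :=
  exists K : nat -> set T, (forall n, compact (K n)) /\ Z = \bigcup_n K n.

Definition closed_discrete (T : topologicalType) (Y : set T) : Prop :=
  closed Y /\ forall y, Y y -> exists V : set T, open V /\ V y /\ V `&` Y = [set y].

Definition le_star (f g : nat -> nat) : Prop :=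
  exists N, forall n, (N <= n)%N -> (f n <= g n)%N.

Definition bounded_family (F : set (nat -> nat)) : Prop :=
  exists g : nat -> nat, forall f, F f -> le_star f g.

(* |Y| < b, where b = min{|F| : F subset of omega^omega unbounded for <=*}:
   equivalently no unbounded family has cardinality <= |Y|. *)
Definition card_lt_bounding (T : Type) (Y : set T) : Prop :=
  forall F : set (nat -> nat), (F #<= Y)%card -> bounded_family F.

Definition absolutely_strongly_star_Lindelof (T : topologicalType) : Prop :=
  forall (U : set (set T)) (D : set T), open_cover U -> dense D ->
    exists C : set T, C `<=` D /\ countable C /\ St C U = setT.

Definition selectively_strongly_star_Hurewicz (T : topologicalType) : Prop :=
  forall (U : nat -> set (set T)) (D : nat -> set T),
    (forall n, open_cover (U n)) -> (forall n, dense (D n)) ->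
    exists F : nat -> set T,
      (forall n, F n `<=` D n /\ finite_set (F n)) /\
      forall x : T, exists N, forall n, (N <= n)%N -> St (F n) (U n) x.

From HB Require Import structures.
From mathcomp Require Import finmap.
From mathcomp Require Import all_boot all_order.
From mathcomp Require Import all_classical all_reals all_analysis.
Set Implicit Arguments. Unset Strict Implicit. Unset Printing Implicit Defensive.
Local Open Scope classical_set_scope.

(* We choose the
   finite sets F_n as a union of two finite selections, one taking care of
   the points of Z and one of the points of Y (every point is in Y or Z).
   - sigma-compact part: writing Z = U_m K_m with K_m compact, the partial
     unions K_0 u ... u K_n are compact, and a compact set is contained in the
     star of a finite subset of any dense set; choosing such finite sets for
     the partial unions, a point of K_m is starred at every stage n >= m.
   - small part: absolute strong star-Lindelofness gives countable C_n inside
     D_n with St(C_n, U_n) = X.  Enumerating C_n injectively by codes, each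
     y in Y defines f_y in omega^omega (f_y(n) = code of a point of C_n whose
     star-neighbourhood contains y).  Since |Y| < b, some g dominates all f_y
     eventually, and the finite sets {c in C_n | code(c) <= g(n)} star every
     point of Y from some stage on. *)

Section Stars.
Variable T : Type.

Lemma St_subset (A B : set T) (U : set (set T)) :
  A `<=` B -> St A U `<=` St B U.
Proof.
move=> AB x [V [UV [a [Va Aa]]] Vx]; exists V => //; split => //.
by exists a; split => //; exact: AB.
Qed.

Definition finite_selection (D F : nat -> set T) : Prop :=
  forall n, F n `<=` D n /\ finite_set (F n).

Definition eventually_starred (U : nat -> set (set T)) (F : nat -> set T)
    (A : set T) : Prop :=
  forall x, A x -> exists N, forall n, (N <= n)%N -> St (F n) (U n) x.

Lemma finite_selectionU (D F G : nat -> set T) :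
  finite_selection D F -> finite_selection D G ->
  finite_selection D (fun n => F n `|` G n).
Proof.
move=> hF hG n; have [FD fF] := hF n; have [GD fG] := hG n.
by split; [move=> x [/FD|/GD] | rewrite finite_setU].
Qed.

Lemma eventually_starredU (U : nat -> set (set T)) (F G : nat -> set T)
    (A B : set T) :
  eventually_starred U F A -> eventually_starred U G B ->
  eventually_starred U (fun n => F n `|` G n) (A `|` B).
Proof.
move=> hA hB x [/hA|/hB] [N HN]; exists N => n /HN.
  by apply: St_subset; exact: subsetUl.
by apply: St_subset; exact: subsetUr.
Qed.

End Stars.

Lemma open_cover_point (T : topologicalType) (U : set (set T)) (x : T) :
  open_cover U -> exists V, U V /\ V x.
Proof.
move=> [_ cU]; have : (\bigcup_(V in U) V) x by rewrite cU.
by case=> V UV Vx; exists V.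
Qed.

(* A copy of T pointed at x, needed to use the library's characterisation of
   compactness by open covers, which is stated for pointed spaces. *)
Definition pointed_at (T : topologicalType) (x : T) : Type := T.
HB.instance Definition _ (T : topologicalType) (x : T) :=
  Topological.copy (@pointed_at T x) T.
HB.instance Definition _ (T : topologicalType) (x : T) :=
  isPointed.Build (@pointed_at T x) x.

Lemma compact_cover_compact (T : topologicalType) (K : set T) :
  compact K -> cover_compact K.
Proof.
move=> cK; have [[x _]|K0] := pselect (K !=set0).
  have : @compact (@pointed_at T x) K := cK.
  by rewrite compact_cover.
by move=> I D f _ _; exists fset0 => // y Ky; exfalso; apply: K0; exists y.
Qed.

Lemma compact_finite_star (T : topologicalType) (K D : set T)
    (U : set (set T)) :
  compact K -> open_cover U -> dense D ->
  exists F, F `<=` D /\ finite_set F /\ K `<=` St F U.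
Proof.
move=> cK cU dD.
have [V HV] := choice (fun x => open_cover_point x cU).
have oV x : open (V x) by exact: cU.1 _ (HV x).1.
have hd x : exists y, D y /\ V x y.
  have [y [Vy Dy]] := dD (V x) (ex_intro _ x (HV x).2) (oV x).
  by exists y.
have [d Hd] := choice hd.
have [P _ KP] := compact_cover_compact cK (fun x _ => oV x)
  (fun x Kx => ex_intro2 _ _ x Kx (HV x).2).
exists (d @` [set` P]); split; first by move=> _ [i _ <-]; exact: (Hd i).1.
split; first exact/finite_image/finite_fset.
move=> x /KP [i Pi Vix]; exists (V i) => //; split; first exact: (HV i).1.
by exists (d i); split; [exact: (Hd i).2 | exists i].
Qed.

Lemma sigma_compact_selection (T : topologicalType) (Z : set T)
    (U : nat -> set (set T)) (D : nat -> set T) :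
  sigma_compact Z -> (forall n, open_cover (U n)) -> (forall n, dense (D n)) ->
  exists F, finite_selection D F /\ eventually_starred U F Z.
Proof.
move=> [K [cK ->]] cU dD.
pose partial n := \big[setU/set0]_(i < n.+1) K i.
have hF n : exists F, F `<=` D n /\ finite_set F /\ partial n `<=` St F (U n).
  by apply: compact_finite_star => //; exact: bigsetU_compact.
have [F HF] := choice hF; exists F; split.
  by move=> n; have [? [? _]] := HF n.
move=> x [m _ Kmx]; exists m => n mn; apply: (HF n).2.2.
by apply: (bigsetU_sup (n := n.+1)) Kmx; rewrite ltnS.
Qed.

Lemma bounded_codes_finite (T : Type) (C : set T) (code : T -> nat) (k : nat) :
  {in C &, injective code} -> finite_set [set c | C c /\ (code c <= k)%N].
Proof.
move=> injC; set A := [set c | C c /\ (code c <= k)%N].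
have injA : {in A &, injective code}.
  by move=> a b; rewrite !inE => Aa Ab; apply: injC; rewrite inE; [exact: Aa.1|exact: Ab.1].
apply: (card_le_finite (B := code @` A)).
  by have /card_esym/card_eqPle[] := inj_card_eq injA.
apply: (sub_finite_set (B := `I_k.+1)); last exact: finite_II.
by move=> _ [a [_ ca] <-]; rewrite /= ltnS.
Qed.

Lemma small_set_selection (T : Type) (Y : set T) (U : nat -> set (set T))
    (C : nat -> set T) :
  card_lt_bounding Y -> (forall n, countable (C n)) ->
  (forall n, St (C n) (U n) = setT) ->
  exists F, finite_selection C F /\ eventually_starred U F Y.
Proof.
move=> smallY cC starC.
have [code Hcode] := choice (fun n => countable_injP (C n) (cC n)).
(* f_y(n) is the code of a point of C_n sharing a member of U_n with y *)
have witness y n : exists k, exists c, [/\ C n c, code n c = k & St [set c] (U n) y].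
  have : St (C n) (U n) y by rewrite starC.
  case=> V [UV [c [Vc Cc]]] Vy; exists (code n c), c; split => //.
  by exists V => //; split => //; exists c.
have fy y : exists f : nat -> nat, forall n,
    exists c, [/\ C n c, code n c = f n & St [set c] (U n) y].
  by have [f Hf] := choice (witness y); exists f.
have [f Hf] := choice fy.
have [g dom_g] := smallY (f @` Y) (card_image_le f Y).
exists (fun n => [set c | C n c /\ (code n c <= g n)%N]); split.
  by move=> n; split; [move=> c [] | exact: bounded_codes_finite (Hcode n)].
move=> y Yy; have [N HN] := dom_g (f y) (ex_intro2 _ _ y Yy erefl).
exists N => n /HN le_fg; have [c [Cc code_c]] := Hf y n.
by apply: St_subset => _ ->; split; rewrite ?code_c.
Qed.

Theorem mainTheorem7 (T : topologicalType) (Y Z : set T) :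
  regular_space T ->
  Y `|` Z = setT -> Y `&` Z = set0 ->
  sigma_compact Z -> closed_discrete Y ->
  absolutely_strongly_star_Lindelof T -> card_lt_bounding Y ->
  selectively_strongly_star_Hurewicz T.
Proof.
move=> _ YZ _ sZ _ assl smallY U D cU dD.
have [C HC] := choice (fun n => assl (U n) (D n) (cU n) (dD n)).
have [FY [selY starY]] := small_set_selection smallY
  (fun n => (HC n).2.1) (fun n => (HC n).2.2).
have [FZ [selZ starZ]] := sigma_compact_selection sZ cU dD.
exists (fun n => FY n `|` FZ n); split.
  apply: finite_selectionU => // n; have [CD finFY] := selY n.
  by split => //; apply: subset_trans CD (HC n).1.
move=> x; have YZx : (Y `|` Z) x by rewrite YZ.
exact: (eventually_starredU starY starZ YZx).
Qed.
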